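(* Let $k\in\{3,4\}$. There is a constant $C$ independent of $N$, $\lambda$ and the frequencies such that $|M_{k+2}(\xi_1,\dots,\xi_{k+2})|\le C\,|\alpha_{k+2}(\xi_1,\dots,\xi_{k+2})|$ for all $(\xi_1,\dots,\xi_{k+2})\in\Omega$.
   Context: Fix $k\in\{3,4\}$, $s\in[\tfrac12,1)$, a large parameter $N\ge1$ and a period $\lambda\ge1$. The frequency variables range over $\frac1\lambda\mathbb Z$. The multiplier $m=m_{N,s}:\mathbb R\to(0,1]$ is a smooth even function, nonincreasing in $|\xi|$, with $m(\xi)=1$ for $|\xi|\le N$ and $m(\xi)=N^{1-s}|\xi|^{s-1}$ for $|\xi|>2N$. For $n\ge2$, $\Gamma_n=\{(\xi_1,\dots,\xi_n)\in(\frac1\lambda\mathbb Z)^n:\xi_1+\dots+\xi_n=0\}$. Write $m_j=m(\xi_j)$, $\alpha_n=\xi_1^3+\dots+\xi_n^3$, $M_{k+2}=i(m_1^2\xi_1^3+\dots+m_{k+2}^2\xi_{k+2}^3)$. For a tuple of frequencies, $\xi_1^*,\xi_2^*,\dots$ denotes its rearrangement with $|\xi_1^*|\ge|\xi_2^*|\ge\cdots$; when $k=3$ set $\xi_6^*=0$. Notation: $A\lesssim B$ means $A\le CB$ with $C$ independent of $N,\lambda$ and the frequencies; $A\sim B$ means $A\lesssim B\lesssim A$; $A\ll B$ (or $B\gg A$) means $A\le C_0^{-1}B$ for a fixed sufficiently large absolute constant $C_0$. The non-resonant set is $\Omega=\Omega_1\cup\Omega_2\cup\Omega_3\cup\Omega_4\subset\Gamma_{k+2}$,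 where $\Omega_1=\{|\xi_3^*|\gg|\xi_4^*|\}$; $\Omega_2=\{|\xi_1^*|\sim|\xi_2^*|\gtrsim N\gg|\xi_3^*|\sim|\xi_4^*|,\ |{\xi_1^*}^3+{\xi_2^*}^3|\gg|{\xi_3^*}^3+\dots+{\xi_{k+2}^*}^3|\}$; $\Omega_3=\{|\xi_1^*|\gg|\xi_3^*|,\ |\xi_1^*+\xi_2^*||\xi_1^*|\gg|\xi_3^*|^2\}$; $\Omega_4=\{|\xi_4^*|\gg|\xi_5^*|,\ |\xi_1^*+\xi_2^*||\xi_1^*+\xi_3^*||\xi_1^*+\xi_4^*|\gg|\xi_5^*||\xi_1^*|^2,\ |m(\xi_1^* )^2{\xi_1^*}^3+\dots+m(\xi_4^* )^2{\xi_4^*}^3|\gg|m(\xi_5^* )^2{\xi_5^*}^3+m(\xi_6^* )^2{\xi_6^*}^3|\}$ (each set consisting of the points of $\Gamma_{k+2}$ satisfying the listed conditions). *)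

From Stdlib Require Import Reals Lra Lia.
Open Scope R_scope.

Fixpoint rsum (n : nat) (f : nat -> R) : R :=
  match n with
  | O => 0
  | S n' => rsum n' f + f n'
  end.

Definition smooth (f : R -> R) : Prop :=
  exists d : nat -> R -> R,
    d O = f /\ forall (j : nat) (x : R), derivable_pt_lim (d j) x (d (S j) x).

Definition admissible_profile (s : R) (mu : R -> R) : Prop :=
  smooth mu /\
  (forall x, mu (- x) = mu x) /\
  (forall x y, Rabs x <= Rabs y -> mu y <= mu x) /\
  (forall x, 0 < mu x <= 1) /\
  (forall x, Rabs x <= 1 -> mu x = 1) /\
  (forall x, 2 < Rabs x -> mu x = Rpower (Rabs x) (s - 1)).

(* m_{N,s}(xi) = mu(xi / N): then m = 1 on |xi| <= N and
   m(xi) = N^(1-s) |xi|^(s-1) on |xi| > 2N. *)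
Definition mult (mu : R -> R) (N xi : R) : R := mu (xi / N).

Definition in_Gamma (n : nat) (lam : R) (xi : nat -> R) : Prop :=
  (forall j, (j < n)%nat -> exists z : Z, xi j = IZR z / lam) /\
  rsum n xi = 0.

Definition alpha (n : nat) (xi : nat -> R) : R := rsum n (fun j => xi j ^ 3).

(* M_n / i = m_1^2 xi_1^3 + ... + m_n^2 xi_n^3  (so |M_n| = |Mreal|). *)
Definition Mreal (mu : R -> R) (N : R) (n : nat) (xi : nat -> R) : R :=
  rsum n (fun j => (mult mu N (xi j)) ^ 2 * xi j ^ 3).

Definition sorting_perm (n : nat) (xi : nat -> R) (sigma : nat -> nat) : Prop :=
  (forall i, (i < n)%nat -> (sigma i < n)%nat) /\
  (forall i j, (i < n)%nat -> (j < n)%nat -> sigma i = sigma j -> i = j) /\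
  (forall i j, (i < j)%nat -> (j < n)%nat -> Rabs (xi (sigma j)) <= Rabs (xi (sigma i))).

(* Rearranged tuple, 0-indexed: star 0 = xi_1^*, ...; entries beyond n are 0
   (so xi_6^* = 0 when n = 5). *)
Definition star (n : nat) (xi : nat -> R) (sigma : nat -> nat) (j : nat) : R :=
  if Nat.ltb j n then xi (sigma j) else 0.

(* Asymptotic relations with explicit constants:
   A ≪ B  :  A <= B / C0 ;  A ∼ B : B/K <= A <= K B ;  A ≳ B : A >= B / K. *)
Definition mll (C0 A B : R) : Prop := A <= B / C0.
Definition msim (K A B : R) : Prop := B / K <= A /\ A <= K * B.

Section Omega.
Variables (n : nat) (C0 K N : R) (mu : R -> R) (x : nat -> R).
(* here x = star n xi sigma, 0-indexed: x 0 = xi_1^*, x 1 = xi_2^*, ... *)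

Definition Omega1 : Prop := mll C0 (Rabs (x 3)) (Rabs (x 2)).

Definition Omega2 : Prop :=
  msim K (Rabs (x 0)) (Rabs (x 1)) /\
  N / K <= Rabs (x 1) /\
  mll C0 (Rabs (x 2)) N /\
  msim K (Rabs (x 2)) (Rabs (x 3)) /\
  mll C0 (Rabs (rsum (n - 2) (fun j => x (j + 2)%nat ^ 3)))
         (Rabs (x 0 ^ 3 + x 1 ^ 3)).

Definition Omega3 : Prop :=
  mll C0 (Rabs (x 2)) (Rabs (x 0)) /\
  mll C0 (Rabs (x 2) ^ 2) (Rabs (x 0 + x 1) * Rabs (x 0)).

Definition Omega4 : Prop :=
  let q := fun j => (mult mu N (x j)) ^ 2 * x j ^ 3 in
  mll C0 (Rabs (x 4)) (Rabs (x 3)) /\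
  mll C0 (Rabs (x 4) * Rabs (x 0) ^ 2)
         (Rabs (x 0 + x 1) * Rabs (x 0 + x 2) * Rabs (x 0 + x 3)) /\
  mll C0 (Rabs (q 4%nat + q 5%nat)) (Rabs (q 0%nat + q 1%nat + q 2%nat + q 3%nat)).
End Omega.

Definition in_Omega (n : nat) (C0 K N : R) (mu : R -> R) (xi : nat -> R) : Prop :=
  exists sigma, sorting_perm n xi sigma /\
    let x := star n xi sigma in
    Omega1 C0 x \/ Omega2 n C0 K N x \/ Omega3 C0 x \/ Omega4 C0 N mu x.

From Stdlib Require Import Reals Lra Lia List Permutation.
From Coquelicot Require Import Coquelicot.
Open Scope R_scope.

(* Write w(z) = mu(z)^2 z^3, so that the summand m_N(u)^2 u^3 of M_{k+2} is N^3 w(u / N).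
   The proof has an analytic and an algebraic half.
   - Analytic: w is C^2 with w'(0) = 0 and |w''(z)| <= Cg |z|: indeed w'' = 6 z where
     mu = 1, w'' = 2 s (2 s + 1) mu^2 z where mu is a power, and w'' is bounded in between
     by compactness.  By the mean value theorem the odd function f = N^3 w(. / N) then
     obeys, uniformly in N, the bounds of the cube u^3 on increments and on second
     differences; moreover f(u) = u^3 for |u| <= N.
   - Algebraic: for any odd f with these two bounds and any sorted six-tuple y0, ..., y5
     of zero sum, each of the conditions defining Omega_1, ..., Omega_4 (with C0 = 100)
     gives |f y0 + ... + f y5| <= (40 Cg + 2) |y0^3 + ... + y5^3|.  In each region the
     dominant part of alpha (3 y0 y1 c with c = -(y0 + y1), y0^3 + y1^3, resp.
     3 (y0 + y1)(y0 + y2)(y0 + y3)) is isolated, and the weighted sum is bounded by the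
     same quantity via the increment and second-difference bounds.
   The theorem follows by rearranging the tuple (finite sums are permutation invariant)
   and, for k = 3, padding it with a zero frequency. *)

(* Finite sums as list sums, to transport permutation invariance from lists. *)
Fixpoint lsum (l : list R) : R :=
  match l with nil => 0 | a :: t => a + lsum t end.

Lemma lsum_app l1 l2 : lsum (l1 ++ l2) = lsum l1 + lsum l2.
Proof. induction l1 as [|a l1 IH]; simpl; [lra|rewrite IH; lra]. Qed.

Lemma lsum_perm l1 l2 : Permutation l1 l2 -> lsum l1 = lsum l2.
Proof. induction 1; simpl; lra. Qed.

Lemma rsum_as_lsum n F : rsum n F = lsum (map F (seq 0 n)).
Proof.
  induction n as [|n IH]; [reflexivity|].
  cbn [rsum]. rewrite seq_S, map_app, lsum_app, IH. simpl. lra.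
Qed.

Lemma rsum_ext n F G : (forall j, (j < n)%nat -> F j = G j) -> rsum n F = rsum n G.
Proof.
  induction n as [|n IH]; intros H; simpl; [reflexivity|].
  rewrite IH, H by (auto || (intros; apply H; lia)). reflexivity.
Qed.

Lemma rsum_perm n F sigma :
  (forall i, (i < n)%nat -> (sigma i < n)%nat) ->
  (forall i j, (i < n)%nat -> (j < n)%nat -> sigma i = sigma j -> i = j) ->
  rsum n (fun j => F (sigma j)) = rsum n F.
Proof.
  intros Hrange Hinj. rewrite !rsum_as_lsum.
  replace (map (fun j => F (sigma j)) (seq 0 n)) with (map F (map sigma (seq 0 n)))
    by (rewrite map_map; reflexivity).
  apply lsum_perm, Permutation_map, Permutation_map_same_l.
  - apply FinFun.Injective_map_NoDup_in; [|apply seq_NoDup].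
    intros x y Hx Hy. apply in_seq in Hx, Hy. apply Hinj; lia.
  - intros z Hz. apply in_map_iff in Hz as [i [<- Hi]]. apply in_seq in Hi. apply in_seq.
    specialize (Hrange i). lia.
Qed.

Lemma rsum_pad n m F : (n <= m)%nat -> (forall j, (n <= j < m)%nat -> F j = 0) ->
  rsum m F = rsum n F.
Proof.
  induction m as [|m IH]; intros Hnm HF.
  - replace n with 0%nat by lia. reflexivity.
  - destruct (Nat.eq_dec n (S m)) as [->|Hne]; [reflexivity|].
    cbn [rsum]. rewrite IH, HF by (lia || (intros; apply HF; lia)). ring.
Qed.

Lemma star_nonincreasing n xi sigma i j : sorting_perm n xi sigma -> (i < j)%nat ->
  Rabs (star n xi sigma j) <= Rabs (star n xi sigma i).
Proof.
  intros [_ [_ Hsorted]] Hij. unfold star.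
  destruct (Nat.ltb j n) eqn:Ej.
  - apply Nat.ltb_lt in Ej. replace (Nat.ltb i n) with true
      by (symmetry; apply Nat.ltb_lt; lia).
    apply Hsorted; assumption.
  - rewrite Rabs_R0. apply Rabs_pos.
Qed.

Lemma rsum_star_padded n xi sigma F : sorting_perm n xi sigma -> (n <= 6)%nat -> F 0 = 0 ->
  rsum n (fun j => F (xi j)) = rsum 6 (fun j => F (star n xi sigma j)).
Proof.
  intros Hs Hn HF0. rewrite (rsum_pad n 6).
  - destruct Hs as [Hrange [Hinj _]].
    rewrite <- (rsum_perm n (fun j => F (xi j)) sigma Hrange Hinj).
    apply rsum_ext. intros j Hj. unfold star.
    replace (Nat.ltb j n) with true by (symmetry; apply Nat.ltb_lt; exact Hj). reflexivity.
  - exact Hn.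
  - intros j Hj. unfold star. replace (Nat.ltb j n) with false
      by (symmetry; apply Nat.ltb_ge; lia). exact HF0.
Qed.

Definition tower (d : nat -> R -> R) : Prop :=
  forall (j : nat) (x : R), derivable_pt_lim (d j) x (d (S j) x).

Lemma tower_is_derive d j x : tower d -> is_derive (d j) x (d (S j) x).
Proof. intros Ht. apply is_derive_Reals, Ht. Qed.

Lemma tower_Derive d j x : tower d -> Derive (d j) x = d (S j) x.
Proof. intros Ht. apply is_derive_unique, tower_is_derive, Ht. Qed.

Lemma locally_abs_lt r x : Rabs x < r -> locally x (fun y => Rabs y < r).
Proof.
  intros Hx. apply (locally_interval _ x (- r) r); simpl;
    [apply Rabs_def2 in Hx; lra | apply Rabs_def2 in Hx; lra |].
  intros y Hy1 Hy2. apply Rabs_def1; simpl in *; lra.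
Qed.

Lemma locally_abs_gt r x : 0 <= r -> r < Rabs x -> locally x (fun y => r < Rabs y).
Proof.
  intros Hr Hx. destruct (Rle_or_lt 0 x) as [Hp|Hn].
  - rewrite Rabs_pos_eq in Hx by lra.
    apply (locally_interval _ x r p_infty); simpl; [lra|exact I|].
    intros y Hy _. simpl in Hy. rewrite Rabs_pos_eq; lra.
  - rewrite Rabs_left in Hx by lra.
    apply (locally_interval _ x m_infty (- r)); simpl; [exact I|lra|].
    intros y _ Hy. simpl in Hy. rewrite Rabs_left; lra.
Qed.

Lemma continuous_bounded_on (f : R -> R) a b : a <= b ->
  (forall c, a <= c <= b -> continuity_pt f c) ->
  exists B, 0 <= B /\ forall c, a <= c <= b -> Rabs (f c) <= B.
Proof.
  intros Hab Hc.
  destruct (continuity_ab_maj (fun c => Rabs (f c)) a b Hab) as [M [HM _]].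
  - intros c Hc'. apply (continuity_pt_comp f Rabs); [auto|apply Rcontinuity_abs].
  - exists (Rabs (f M)). split; [apply Rabs_pos|exact HM].
Qed.

Definition weight (d : nat -> R -> R) (z : R) : R := d 0%nat z ^ 2 * z ^ 3.
Definition weight_d1 (d : nat -> R -> R) (z : R) : R :=
  2 * d 0%nat z * d 1%nat z * z ^ 3 + 3 * d 0%nat z ^ 2 * z ^ 2.
Definition weight_d2 (d : nat -> R -> R) (z : R) : R :=
  2 * d 1%nat z ^ 2 * z ^ 3 + 2 * d 0%nat z * d 2%nat z * z ^ 3
  + 12 * d 0%nat z * d 1%nat z * z ^ 2 + 6 * d 0%nat z ^ 2 * z.

Section Weight.
Variable d : nat -> R -> R.
Hypothesis Htower : tower d.

Lemma weight_derive x : derivable_pt_lim (weight d) x (weight_d1 d x).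
Proof.
  apply is_derive_Reals. unfold weight, weight_d1. auto_derive.
  - repeat split; eexists; apply tower_is_derive, Htower.
  - rewrite tower_Derive by exact Htower. ring.
Qed.

Lemma weight_d1_derive x : derivable_pt_lim (weight_d1 d) x (weight_d2 d x).
Proof.
  apply is_derive_Reals. unfold weight_d1, weight_d2. auto_derive.
  - repeat split; eexists; apply tower_is_derive, Htower.
  - rewrite !tower_Derive by exact Htower. ring.
Qed.

Lemma weight_d2_continuous x : continuity_pt (weight_d2 d) x.
Proof.
  apply derivable_continuous_pt, ex_derive_Reals_0. unfold weight_d2.
  auto_derive. repeat split; eexists; apply tower_is_derive, Htower.
Qed.

End Weight.

Section Profile.
Variables (s : R) (d : nat -> R -> R).
Hypothesis Htower : tower d.
Hypothesis Hflat : forall y, Rabs y <= 1 -> d 0%nat y = 1.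
Hypothesis Hpower : forall y, 2 < Rabs y -> d 0%nat y = Rpower (Rabs y) (s - 1).
Hypothesis Hrange : forall y, 0 < d 0%nat y <= 1.

Lemma profile_flat_d1 x : Rabs x < 1 -> d 1%nat x = 0.
Proof.
  intros Hx. rewrite <- tower_Derive by exact Htower.
  rewrite (Derive_ext_loc _ (fun _ => 1)); [apply Derive_const|].
  apply (filter_imp (fun y => Rabs y < 1)); [|exact (locally_abs_lt 1 x Hx)].
  intros y Hy. apply Hflat. lra.
Qed.

Lemma profile_flat_d2 x : Rabs x < 1 -> d 2%nat x = 0.
Proof.
  intros Hx. rewrite <- tower_Derive by exact Htower.
  rewrite (Derive_ext_loc _ (fun _ => 0)); [apply Derive_const|].
  apply (filter_imp (fun y => Rabs y < 1)); [|exact (locally_abs_lt 1 x Hx)].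
  exact profile_flat_d1.
Qed.

Lemma profile_power_d1 x : 2 < Rabs x -> d 1%nat x = (s - 1) * d 0%nat x / x.
Proof.
  intros Hx. assert (Hx0 : x <> 0) by (intros ->; rewrite Rabs_R0 in Hx; lra).
  rewrite <- tower_Derive by exact Htower.
  rewrite (Derive_ext_loc _ (fun y => exp ((s - 1) * ln (Rabs y)))).
  - apply is_derive_unique. rewrite Hpower by exact Hx. unfold Rpower.
    auto_derive; [split; [exact Hx0|lra]|].
    destruct (Rle_or_lt 0 x) as [Hp|Hn].
    + rewrite sign_eq_1, Rabs_pos_eq by lra. field. exact Hx0.
    + rewrite sign_eq_m1, Rabs_left by lra. field. exact Hx0.
  - apply (filter_imp (fun y => 2 < Rabs y)); [|exact (locally_abs_gt 2 x ltac:(lra) Hx)].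
    intros y Hy. rewrite Hpower by exact Hy. reflexivity.
Qed.

Lemma profile_power_d2 x : 2 < Rabs x ->
  d 2%nat x = (s - 1) * (s - 2) * d 0%nat x / x ^ 2.
Proof.
  intros Hx. assert (Hx0 : x <> 0) by (intros ->; rewrite Rabs_R0 in Hx; lra).
  rewrite <- tower_Derive by exact Htower.
  rewrite (Derive_ext_loc _ (fun y => (s - 1) * d 0%nat y / y)).
  - apply is_derive_unique.
    auto_derive; [split; [eexists; apply tower_is_derive, Htower|auto]|].
    rewrite tower_Derive, profile_power_d1 by assumption. field. exact Hx0.
  - apply (filter_imp (fun y => 2 < Rabs y)); [|exact (locally_abs_gt 2 x ltac:(lra) Hx)].
    exact profile_power_d1.
Qed.

(* |w''(z)| <= Cg |z|: w'' = 6 z where mu = 1, w'' = 2 s (2 s + 1) mu^2 z where mu is a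
   power, and w'' is bounded by continuity in between. *)
Lemma weight_d2_linear_bound : 0 <= s <= 1 ->
  exists Cg, 0 <= Cg /\ forall z, Rabs (weight_d2 d z) <= Cg * Rabs z.
Proof.
  intros Hs.
  destruct (continuous_bounded_on (weight_d2 d) (-2) 2 ltac:(lra)) as [B [HB0 HB]].
  { intros c _. apply weight_d2_continuous, Htower. }
  exists (6 + B). split; [lra|]. intros z. pose proof (Rabs_pos z).
  destruct (Rlt_or_le (Rabs z) 1) as [Hz1|Hz1]; [|destruct (Rlt_or_le 2 (Rabs z)) as [Hz2|Hz2]].
  - unfold weight_d2.
    rewrite profile_flat_d1, profile_flat_d2, Hflat by lra.
    replace (2 * 0 ^ 2 * z ^ 3 + 2 * 1 * 0 * z ^ 3 + 12 * 1 * 0 * z ^ 2 + 6 * 1 ^ 2 * z)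
      with (6 * z) by ring.
    rewrite Rabs_mult, (Rabs_pos_eq 6) by lra. nra.
  - assert (Hz0 : z <> 0) by (intros ->; rewrite Rabs_R0 in Hz2; lra).
    unfold weight_d2.
    rewrite profile_power_d1, profile_power_d2 by exact Hz2.
    replace (2 * ((s - 1) * d 0%nat z / z) ^ 2 * z ^ 3
             + 2 * d 0%nat z * ((s - 1) * (s - 2) * d 0%nat z / z ^ 2) * z ^ 3
             + 12 * d 0%nat z * ((s - 1) * d 0%nat z / z) * z ^ 2 + 6 * d 0%nat z ^ 2 * z)
      with ((2 * s * (2 * s + 1) * d 0%nat z ^ 2) * z) by (field; exact Hz0).
    pose proof (Hrange z) as Hd.
    assert (Hcoef : 0 <= 2 * s * (2 * s + 1) <= 6) by nra.
    assert (Hd2 : 0 <= d 0%nat z ^ 2 <= 1) by (simpl; split; nra).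
    rewrite Rabs_mult, Rabs_pos_eq by (apply Rmult_le_pos; lra).
    apply Rmult_le_compat_r; [lra|]. nra.
  - apply Rle_trans with B; [apply HB, Rabs_le_between; lra|nra].
Qed.

End Profile.

(* The increment and second-difference bounds satisfied by the cube u |-> u^3. *)
Definition cubic_lipschitz (Cg : R) (f : R -> R) : Prop :=
  forall u v, Rabs (f u - f v) <= Cg * Rabs (u - v) * (Rabs u + Rabs v) ^ 2.

Definition cubic_second_difference (Cg : R) (f : R -> R) : Prop :=
  forall p D E, Rabs (f p - f (p + D) - f (p + E) + f (p + D + E))
    <= Cg * Rabs D * Rabs E * (Rabs p + Rabs D + Rabs E).

Lemma Rmax_abs_le_sum a b : Rmax (Rabs a) (Rabs b) <= Rabs a + Rabs b.
Proof. pose proof (Rabs_pos a); pose proof (Rabs_pos b). unfold Rmax; destruct Rle_dec; lra. Qed.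

Lemma Rmax_abs_shift a b : Rmax (Rabs a) (Rabs (a + b)) <= Rabs a + Rabs b.
Proof.
  pose proof (Rabs_pos a); pose proof (Rabs_pos b); pose proof (Rabs_triang a b).
  unfold Rmax; destruct Rle_dec; lra.
Qed.

Lemma mvt_abs (f f' : R -> R) : (forall c, derivable_pt_lim f c (f' c)) ->
  forall a b, exists c, f b - f a = f' c * (b - a) /\ Rabs c <= Rmax (Rabs a) (Rabs b).
Proof.
  intros Hd a b.
  assert (Hbetween : forall c, Rmin a b <= c <= Rmax a b -> Rabs c <= Rmax (Rabs a) (Rabs b)).
  { intros c Hc. unfold Rmin, Rmax in *. repeat destruct Rle_dec; unfold Rabs in *;
      repeat destruct Rcase_abs; lra. }
  destruct (Rtotal_order a b) as [Hab|[<-|Hab]].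
  - destruct (MVT_cor2 f f' a b Hab (fun c _ => Hd c)) as [c [Hc1 Hc2]].
    exists c. split; [exact Hc1|]. apply Hbetween. rewrite Rmin_left, Rmax_right; lra.
  - exists a. split; [ring|]. apply Hbetween. rewrite Rmin_left, Rmax_left; lra.
  - destruct (MVT_cor2 f f' b a Hab (fun c _ => Hd c)) as [c [Hc1 Hc2]].
    exists c. split; [lra|]. apply Hbetween. rewrite Rmin_right, Rmax_left; lra.
Qed.

Section SecondOrder.
Variables (g g1 g2 : R -> R) (Cg : R).
Hypothesis Hg : forall x, derivable_pt_lim g x (g1 x).
Hypothesis Hg1 : forall x, derivable_pt_lim g1 x (g2 x).
Hypothesis Hg1_0 : g1 0 = 0.
Hypothesis HCg : 0 <= Cg.
Hypothesis Hg2 : forall z, Rabs (g2 z) <= Cg * Rabs z.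

Lemma first_derivative_quadratic z : Rabs (g1 z) <= Cg * Rabs z ^ 2.
Proof.
  destruct (mvt_abs g1 g2 Hg1 0 z) as [c [Hc Hcz]].
  rewrite Hg1_0, !Rminus_0_r in Hc. rewrite Hc, Rabs_mult.
  rewrite Rabs_R0, Rmax_right in Hcz by apply Rabs_pos.
  pose proof (Hg2 c). pose proof (Rabs_pos c). pose proof (Rabs_pos z).
  assert (Rabs (g2 c) <= Cg * Rabs z)
    by (eapply Rle_trans; [eassumption|]; apply Rmult_le_compat_l; lra).
  replace (Cg * Rabs z ^ 2) with (Cg * Rabs z * Rabs z) by ring.
  apply Rmult_le_compat_r; lra.
Qed.

Lemma second_order_lipschitz : cubic_lipschitz Cg g.
Proof.
  intros u v. destruct (mvt_abs g g1 Hg v u) as [c [Hc Hcuv]].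
  rewrite Hc, Rabs_mult. pose proof (Rmax_abs_le_sum v u).
  pose proof (first_derivative_quadratic c). pose proof (Rabs_pos c).
  pose proof (Rabs_pos u). pose proof (Rabs_pos v). pose proof (Rabs_pos (u - v)).
  assert (Rabs c ^ 2 <= (Rabs u + Rabs v) ^ 2) by (apply pow_incr; lra).
  assert (Rabs (g1 c) <= Cg * (Rabs u + Rabs v) ^ 2)
    by (eapply Rle_trans; [eassumption|]; apply Rmult_le_compat_l; lra).
  rewrite (Rmult_comm (Rabs (g1 c))), Rmult_assoc, (Rmult_comm Cg), Rmult_assoc.
  apply Rmult_le_compat_l; lra.
Qed.

(* Mean value theorem applied to y |-> g(y + D) - g(y), then to g'. *)
Lemma second_order_difference : cubic_second_difference Cg g.
Proof.
  intros p D E.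
  set (phi := fun y => g (y + D) - g y).
  assert (Hphi : forall c, derivable_pt_lim phi c (g1 (c + D) - g1 c)).
  { intros c. apply derivable_pt_lim_minus; [|apply Hg].
    replace (g1 (c + D)) with (g1 (c + D) * 1) by ring.
    apply (derivable_pt_lim_comp (fun y => y + D) g); [|apply Hg].
    apply is_derive_Reals. auto_derive; [exact I|ring]. }
  destruct (mvt_abs phi _ Hphi p (p + E)) as [c [Hc1 Hc2]].
  destruct (mvt_abs g1 g2 Hg1 c (c + D)) as [c' [Hc3 Hc4]].
  unfold phi in Hc1.
  replace (g p - g (p + D) - g (p + E) + g (p + D + E))
    with (g (p + E + D) - g (p + E) - (g (p + D) - g p))
    by (replace (p + E + D) with (p + D + E) by ring; ring).
  rewrite Hc1, Hc3. replace (c + D - c) with D by ring. replace (p + E - p) with E by ring.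
  rewrite !Rabs_mult.
  pose proof (Rmax_abs_shift c D). pose proof (Rmax_abs_shift p E).
  pose proof (Rabs_pos c'). pose proof (Rabs_pos D). pose proof (Rabs_pos E).
  assert (Hc' : Rabs c' <= Rabs p + Rabs D + Rabs E) by lra.
  assert (Rabs (g2 c') <= Cg * (Rabs p + Rabs D + Rabs E))
    by (eapply Rle_trans; [apply Hg2|]; apply Rmult_le_compat_l; lra).
  replace (Cg * Rabs D * Rabs E * (Rabs p + Rabs D + Rabs E))
    with (Cg * (Rabs p + Rabs D + Rabs E) * Rabs D * Rabs E) by ring.
  apply Rmult_le_compat_r; [lra|]. apply Rmult_le_compat_r; [lra|]. assumption.
Qed.

End SecondOrder.

Lemma cubic_lipschitz_scale Cg g f N : 0 < N -> (forall u, f u = N ^ 3 * g (u / N)) ->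
  cubic_lipschitz Cg g -> cubic_lipschitz Cg f.
Proof.
  intros HN Hf Hg u v. rewrite !Hf. pose proof (Hg (u / N) (v / N)) as H.
  replace (u / N - v / N) with ((u - v) / N) in H by (field; lra).
  rewrite <- Rmult_minus_distr_l, Rabs_mult, (Rabs_pos_eq (N ^ 3)) by (apply pow_le; lra).
  unfold Rdiv in H. rewrite !Rabs_mult, Rabs_inv, (Rabs_pos_eq N) in H by lra.
  apply Rle_trans with (N ^ 3 * (Cg * (Rabs (u - v) * / N) * (Rabs u * / N + Rabs v * / N) ^ 2));
    [apply Rmult_le_compat_l; [apply pow_le; lra|exact H]|].
  right. field. lra.
Qed.

Lemma cubic_second_difference_scale Cg g f N : 0 < N -> (forall u, f u = N ^ 3 * g (u / N)) ->
  cubic_second_difference Cg g -> cubic_second_difference Cg f.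
Proof.
  intros HN Hf Hg p D E. rewrite !Hf. pose proof (Hg (p / N) (D / N) (E / N)) as H.
  replace ((p + D) / N) with (p / N + D / N) by (field; lra).
  replace ((p + E) / N) with (p / N + E / N) by (field; lra).
  replace ((p + D + E) / N) with (p / N + D / N + E / N) by (field; lra).
  replace (N ^ 3 * g (p / N) - N ^ 3 * g (p / N + D / N) - N ^ 3 * g (p / N + E / N)
           + N ^ 3 * g (p / N + D / N + E / N))
    with (N ^ 3 * (g (p / N) - g (p / N + D / N) - g (p / N + E / N) + g (p / N + D / N + E / N)))
    by ring.
  rewrite Rabs_mult, (Rabs_pos_eq (N ^ 3)) by (apply pow_le; lra).
  unfold Rdiv in H. rewrite !Rabs_mult, Rabs_inv, (Rabs_pos_eq N) in H by lra.
  apply Rle_trans with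
    (N ^ 3 * (Cg * (Rabs D * / N) * (Rabs E * / N) * (Rabs p * / N + Rabs D * / N + Rabs E * / N)));
    [apply Rmult_le_compat_l; [apply pow_le; lra|exact H]|].
  right. field. lra.
Qed.

Lemma Rabs_sum_lower a b : Rabs a - Rabs b <= Rabs (a + b).
Proof.
  pose proof (Rabs_triang (a + b) (- b)) as T. rewrite Rabs_Ropp in T.
  replace (a + b + - b) with a in T by ring. lra.
Qed.

Lemma Rabs_triang4 a b c d : Rabs (a + b + c + d) <= Rabs a + Rabs b + Rabs c + Rabs d.
Proof.
  pose proof (Rabs_triang (a + b + c) d). pose proof (Rabs_triang (a + b) c).
  pose proof (Rabs_triang a b). lra.
Qed.

Lemma Rabs_triang5 a b c d e :
  Rabs (a + b + c + d + e) <= Rabs a + Rabs b + Rabs c + Rabs d + Rabs e.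
Proof. pose proof (Rabs_triang (a + b + c + d) e). pose proof (Rabs_triang4 a b c d). lra. Qed.

Lemma cube_abs_le r y : Rabs y <= r -> Rabs (y ^ 3) <= r ^ 3.
Proof. intros Hy. rewrite <- RPow_abs. apply pow_incr. split; [apply Rabs_pos|exact Hy]. Qed.

Lemma mul3_le a b c a' b' c' :
  0 <= a <= a' -> 0 <= b <= b' -> 0 <= c <= c' -> a * b * c <= a' * b' * c'.
Proof. intros. apply Rmult_le_compat; try apply Rmult_le_compat; try apply Rmult_le_pos; lra. Qed.

Lemma cube_difference_le a b : Rabs (a ^ 3 - b ^ 3) <= Rabs (a - b) * (Rabs a + Rabs b) ^ 2.
Proof.
  replace (a ^ 3 - b ^ 3) with ((a - b) * (a ^ 2 + a * b + b ^ 2)) by ring.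
  rewrite Rabs_mult. apply Rmult_le_compat_l; [apply Rabs_pos|].
  pose proof (Rabs_triang (a ^ 2 + a * b) (b ^ 2)). pose proof (Rabs_triang (a ^ 2) (a * b)).
  rewrite Rabs_mult, <- !RPow_abs in *. pose proof (Rabs_pos a). pose proof (Rabs_pos b).
  simpl in *. nra.
Qed.

(* |y0^3 + y1^3| controls |y0 + y1| (|y0| + |y1|)^2, since y0^2 - y0 y1 + y1^2
   is at least (|y0| + |y1|)^2 / 4. *)
Lemma cube_pair_lower y0 y1 :
  Rabs (y0 + y1) * (Rabs y0 + Rabs y1) ^ 2 / 4 <= Rabs (y0 ^ 3 + y1 ^ 3).
Proof.
  replace (y0 ^ 3 + y1 ^ 3) with ((y0 + y1) * (y0 ^ 2 - y0 * y1 + y1 ^ 2)) by ring.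
  assert (HQ : (Rabs y0 + Rabs y1) ^ 2 / 4 <= y0 ^ 2 - y0 * y1 + y1 ^ 2).
  { rewrite <- (pow2_abs y0), <- (pow2_abs y1).
    pose proof (Rle_abs (y0 * y1)). rewrite Rabs_mult in H.
    pose proof (pow2_ge_0 (Rabs y0 - Rabs y1)). simpl in *. nra. }
  rewrite Rabs_mult, (Rabs_pos_eq (y0 ^ 2 - y0 * y1 + y1 ^ 2))
    by (pose proof (pow2_ge_0 (Rabs y0 + Rabs y1)); lra).
  pose proof (Rabs_pos (y0 + y1)). unfold Rdiv in *. nra.
Qed.

Lemma absorb_constant Cg F A X c : 0 <= Cg -> 0 <= X ->
  Rabs F <= c * Cg * X -> c * X <= 40 * Rabs A -> Rabs F <= (40 * Cg + 2) * Rabs A.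
Proof.
  intros HC HX HF HA. pose proof (Rabs_pos A).
  assert (Cg * (c * X) <= Cg * (40 * Rabs A)) by (apply Rmult_le_compat_l; lra). nra.
Qed.

Section OddCubic.
Variables (f : R -> R) (Cg : R).
Hypothesis HCg : 0 <= Cg.
Hypothesis Hodd : forall u, f (- u) = - f u.
Hypothesis Hlip : cubic_lipschitz Cg f.
Hypothesis Hdd : cubic_second_difference Cg f.

Lemma odd_zero : f 0 = 0.
Proof. pose proof (Hodd 0) as H. rewrite Ropp_0 in H. lra. Qed.

Lemma cubic_growth r u : Rabs u <= r -> Rabs (f u) <= Cg * r ^ 3.
Proof.
  intros Hu. pose proof (Hlip u 0) as H.
  rewrite odd_zero, !Rminus_0_r, Rabs_R0, Rplus_0_r in H.
  eapply Rle_trans; [exact H|]. replace (Cg * Rabs u * Rabs u ^ 2) with (Cg * Rabs u ^ 3) by ring.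
  apply Rmult_le_compat_l; [exact HCg|]. apply pow_incr. split; [apply Rabs_pos|exact Hu].
Qed.

(* By oddness the increment bound controls f u + f v by |u + v|. *)
Lemma pair_bound u v : Rabs (f u + f v) <= Cg * Rabs (u + v) * (Rabs u + Rabs v) ^ 2.
Proof.
  pose proof (Hlip u (- v)) as H. rewrite Hodd, Rabs_Ropp in H.
  replace (f u - - f v) with (f u + f v) in H by ring.
  replace (u - - v) with (u + v) in H by ring. exact H.
Qed.

(* Three frequencies of zero sum: the second difference of f at (a, b, c). *)
Lemma triple_bound a b c : a + b + c = 0 ->
  Rabs (f a + f b + f c) <= Cg * Rabs b * Rabs c * (Rabs a + Rabs b + Rabs c).
Proof.
  intros Hs. pose proof (Hdd a b c) as H.
  replace (a + b) with (- c) in H by lra. replace (a + c) with (- b) in H by lra.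
  replace (- c + c) with 0 in H by ring.
  rewrite !Hodd, odd_zero in H. eapply Rle_trans; [|exact H]. right. f_equal. ring.
Qed.

(* Four frequencies of small sum S, z0 the largest, with |z0 + z3| >= |z0| / 2.  With
   w = -(z0 + z1 + z2), the second difference at (z0, -(z0 + z1), -(z0 + z2)) controls
   f z0 + f z1 + f z2 + f w, and the increment bound controls f z3 - f w as z3 - w = S. *)
Lemma quad_bound z0 z1 z2 z3 :
  Rabs z1 <= Rabs z0 -> Rabs z2 <= Rabs z0 -> Rabs z3 <= Rabs z0 ->
  Rabs (z0 + z1 + z2 + z3) <= 2 * Rabs z0 -> Rabs z0 / 2 <= Rabs (z0 + z3) ->
  Rabs (f z0 + f z1 + f z2 + f z3) <=
    10 * Cg * (Rabs (z0 + z1) * Rabs (z0 + z2) * Rabs (z0 + z3))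
    + 16 * Cg * (Rabs (z0 + z1 + z2 + z3) * Rabs z0 ^ 2).
Proof.
  intros H1 H2 H3 HS Hh.
  set (S := z0 + z1 + z2 + z3) in *. set (w := - (z0 + z1 + z2)).
  pose proof (Rabs_pos z0). pose proof (Rabs_pos (z0 + z1)). pose proof (Rabs_pos (z0 + z2)).
  pose proof (Rabs_pos S).
  pose proof (Rabs_triang z0 z1). pose proof (Rabs_triang z0 z2).
  assert (HA : Rabs (f z0 + f z1 + f z2 + f w)
                 <= Cg * Rabs (z0 + z1) * Rabs (z0 + z2) * (5 * Rabs z0)).
  { pose proof (Hdd z0 (- (z0 + z1)) (- (z0 + z2))) as Hd.
    replace (z0 + - (z0 + z1) + - (z0 + z2)) with w in Hd by (unfold w; ring).
    replace (z0 + - (z0 + z1)) with (- z1) in Hd by ring.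
    replace (z0 + - (z0 + z2)) with (- z2) in Hd by ring.
    rewrite !Hodd, !Rabs_Ropp in Hd.
    replace (f z0 - - f z1 - - f z2 + f w) with (f z0 + f z1 + f z2 + f w) in Hd by ring.
    eapply Rle_trans; [exact Hd|]. apply Rmult_le_compat_l; [|lra].
    apply Rmult_le_pos; [apply Rmult_le_pos|]; lra. }
  assert (HB : Rabs (f z3 - f w) <= Cg * (Rabs S * (4 * Rabs z0) ^ 2)).
  { eapply Rle_trans; [apply Hlip|].
    replace (z3 - w) with S by (unfold S, w; ring).
    assert (Rabs w <= 3 * Rabs z0).
    { replace w with (z3 - S) by (unfold S, w; ring).
      pose proof (Rabs_triang z3 (- S)) as T. rewrite Rabs_Ropp in T. unfold Rminus. lra. }
    rewrite Rmult_assoc. apply Rmult_le_compat_l; [lra|]. apply Rmult_le_compat_l; [lra|].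
    apply pow_incr. pose proof (Rabs_pos w). pose proof (Rabs_pos z3). lra. }
  assert (HX : Rabs (z0 + z1) * Rabs (z0 + z2) * Rabs z0
               <= 2 * (Rabs (z0 + z1) * Rabs (z0 + z2) * Rabs (z0 + z3))).
  { replace (2 * (Rabs (z0 + z1) * Rabs (z0 + z2) * Rabs (z0 + z3)))
      with (Rabs (z0 + z1) * Rabs (z0 + z2) * (2 * Rabs (z0 + z3))) by ring.
    apply Rmult_le_compat_l; [apply Rmult_le_pos|]; lra. }
  replace (f z0 + f z1 + f z2 + f z3) with ((f z0 + f z1 + f z2 + f w) + (f z3 - f w)) by ring.
  assert (Cg * (Rabs (z0 + z1) * Rabs (z0 + z2) * Rabs z0)
          <= Cg * (2 * (Rabs (z0 + z1) * Rabs (z0 + z2) * Rabs (z0 + z3))))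
    by (apply Rmult_le_compat_l; lra).
  eapply Rle_trans; [apply Rabs_triang|]. lra.
Qed.

End OddCubic.

Section SixTuple.
Variables (f : R -> R) (Cg : R) (y0 y1 y2 y3 y4 y5 : R).
Hypothesis HCg : 0 <= Cg.
Hypothesis Hodd : forall u, f (- u) = - f u.
Hypothesis Hlip : cubic_lipschitz Cg f.
Hypothesis Hdd : cubic_second_difference Cg f.
Hypotheses (H01 : Rabs y1 <= Rabs y0) (H12 : Rabs y2 <= Rabs y1) (H23 : Rabs y3 <= Rabs y2)
  (H34 : Rabs y4 <= Rabs y3) (H45 : Rabs y5 <= Rabs y4).
Hypothesis Hsum : y0 + y1 + y2 + y3 + y4 + y5 = 0.

Local Notation weighted := (f y0 + f y1 + f y2 + f y3 + f y4 + f y5).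
Local Notation alpha6 := (y0 ^ 3 + y1 ^ 3 + y2 ^ 3 + y3 ^ 3 + y4 ^ 3 + y5 ^ 3).

(* In Omega_1 the three smallest frequencies are negligible, so that
   -(y0 + y1) = y2 + (y3 + y4 + y5) is close to y2. *)
Lemma omega1_geometry : Rabs y3 <= Rabs y2 / 100 ->
  Rabs (y3 + y4 + y5) <= 3 * Rabs y2 / 100 /\
  97 / 100 * Rabs y2 <= Rabs (- (y0 + y1)) <= 2 * Rabs y2.
Proof.
  intros Ha. pose proof (Rabs_triang (y3 + y4) y5). pose proof (Rabs_triang y3 y4).
  assert (He : Rabs (y3 + y4 + y5) <= 3 * Rabs y2 / 100) by lra.
  replace (- (y0 + y1)) with (y2 + (y3 + y4 + y5)) by lra.
  pose proof (Rabs_triang y2 (y3 + y4 + y5)). pose proof (Rabs_sum_lower y2 (y3 + y4 + y5)).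
  pose proof (Rabs_pos y2). lra.
Qed.

(* Grouping f(y0) + f(y1) + f(c) with c = -(y0 + y1), and f(y2) - f(c). *)
Lemma omega1_weighted : Rabs y3 <= Rabs y2 / 100 ->
  Rabs weighted <= 10 * Cg * (Rabs y0 * Rabs y1 * Rabs y2).
Proof.
  intros Ha. destruct (omega1_geometry Ha) as [He Hc].
  set (c := - (y0 + y1)) in *. set (P := Rabs y0 * Rabs y1 * Rabs y2).
  pose proof (Rabs_pos y0). pose proof (Rabs_pos y1). pose proof (Rabs_pos y2).
  pose proof (Rabs_pos (y3 + y4 + y5)).
  assert (HP : Rabs y2 ^ 3 <= P)
    by (unfold P; replace (Rabs y2 ^ 3) with (Rabs y2 * Rabs y2 * Rabs y2) by ring;
        apply mul3_le; lra).
  assert (HP0 : 0 <= P) by (unfold P; apply Rmult_le_pos; [apply Rmult_le_pos|]; lra).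
  assert (HT1 : Rabs (f y0 + f y1 + f c) <= Cg * (8 * P)).
  { eapply Rle_trans; [apply (triple_bound f Cg Hodd Hdd); unfold c; ring|].
    assert (Rabs y1 * Rabs c * (Rabs y0 + Rabs y1 + Rabs c)
            <= Rabs y1 * (2 * Rabs y2) * (4 * Rabs y0)) by (apply mul3_le; lra).
    assert (Cg * (Rabs y1 * Rabs c * (Rabs y0 + Rabs y1 + Rabs c))
            <= Cg * (Rabs y1 * (2 * Rabs y2) * (4 * Rabs y0))) by (apply Rmult_le_compat_l; lra).
    unfold P. lra. }
  assert (HT2 : Rabs (f y2 - f c) <= Cg * P).
  { eapply Rle_trans; [apply Hlip|].
    replace (y2 - c) with (- (y3 + y4 + y5)) by (unfold c; lra). rewrite Rabs_Ropp.
    rewrite Rmult_assoc. apply Rmult_le_compat_l; [exact HCg|].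
    assert ((Rabs y2 + Rabs c) ^ 2 <= (3 * Rabs y2) ^ 2) by (apply pow_incr; lra).
    apply Rle_trans with (3 * Rabs y2 / 100 * (3 * Rabs y2) ^ 2);
      [apply Rmult_le_compat; [lra|apply pow2_ge_0|lra|lra]|].
    simpl. nra. }
  assert (Htail : forall y, Rabs y <= Rabs y3 -> Rabs (f y) <= Cg * (P / 100)).
  { intros y Hy. eapply Rle_trans; [apply (cubic_growth f Cg HCg Hodd Hlip (Rabs y2 / 100)); lra|].
    apply Rmult_le_compat_l; [exact HCg|].
    replace ((Rabs y2 / 100) ^ 3) with (Rabs y2 ^ 3 / 1000000) by field. lra. }
  pose proof (Htail y3 (Rle_refl _)). pose proof (Htail y4 H34). pose proof (Htail y5 ltac:(lra)).
  replace weighted with ((f y0 + f y1 + f c) + (f y2 - f c) + f y3 + f y4 + f y5) by ring.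
  assert (0 <= Cg * P) by (apply Rmult_le_pos; lra).
  pose proof (Rabs_triang5 (f y0 + f y1 + f c) (f y2 - f c) (f y3) (f y4) (f y5)). lra.
Qed.

(* alpha = 3 y0 y1 c + (y2^3 - c^3) + y3^3 + y4^3 + y5^3, dominated by the first term. *)
Lemma omega1_alpha : Rabs y3 <= Rabs y2 / 100 ->
  2 * (Rabs y0 * Rabs y1 * Rabs y2) <= Rabs alpha6.
Proof.
  intros Ha. destruct (omega1_geometry Ha) as [He Hc].
  set (c := - (y0 + y1)) in *. set (e := y3 + y4 + y5) in *.
  set (P := Rabs y0 * Rabs y1 * Rabs y2).
  pose proof (Rabs_pos y0). pose proof (Rabs_pos y1). pose proof (Rabs_pos y2).
  pose proof (Rabs_pos e).
  assert (HP : Rabs y2 ^ 3 <= P)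
    by (unfold P; replace (Rabs y2 ^ 3) with (Rabs y2 * Rabs y2 * Rabs y2) by ring;
        apply mul3_le; lra).
  assert (HP0 : 0 <= P) by (unfold P; apply Rmult_le_pos; [apply Rmult_le_pos|]; lra).
  assert (Hmain : 291 / 100 * P <= Rabs (3 * y0 * y1 * c)).
  { rewrite !Rabs_mult, (Rabs_pos_eq 3) by lra.
    replace (291 / 100 * P) with (3 * Rabs y0 * Rabs y1 * (97 / 100 * Rabs y2))
      by (unfold P; field).
    apply Rmult_le_compat_l; [|lra]. apply Rmult_le_pos; [apply Rmult_le_pos|]; lra. }
  assert (Hdiff : Rabs (y2 ^ 3 - c ^ 3) <= 27 / 100 * P).
  { eapply Rle_trans; [apply cube_difference_le|].
    replace (y2 - c) with (- e) by (unfold e, c; lra). rewrite Rabs_Ropp.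
    assert ((Rabs y2 + Rabs c) ^ 2 <= (3 * Rabs y2) ^ 2)
      by (apply pow_incr; pose proof (Rabs_pos c); lra).
    apply Rle_trans with (3 * Rabs y2 / 100 * (3 * Rabs y2) ^ 2);
      [apply Rmult_le_compat; [lra|apply pow2_ge_0|lra|lra]|].
    simpl in *. lra. }
  assert (Htail : forall y, Rabs y <= Rabs y3 -> Rabs (y ^ 3) <= P / 100).
  { intros y Hy. eapply Rle_trans; [apply (cube_abs_le (Rabs y2 / 100)); lra|].
    replace ((Rabs y2 / 100) ^ 3) with (Rabs y2 ^ 3 / 1000000) by field. lra. }
  pose proof (Htail y3 (Rle_refl _)). pose proof (Htail y4 H34). pose proof (Htail y5 ltac:(lra)).
  replace alpha6 with (3 * y0 * y1 * c + ((y2 ^ 3 - c ^ 3) + y3 ^ 3 + y4 ^ 3 + y5 ^ 3))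
    by (unfold c; ring).
  eapply Rle_trans; [|apply Rabs_sum_lower].
  pose proof (Rabs_triang4 (y2 ^ 3 - c ^ 3) (y3 ^ 3) (y4 ^ 3) (y5 ^ 3)). lra.
Qed.

Lemma omega1_estimate : Rabs y3 <= Rabs y2 / 100 -> Rabs weighted <= (40 * Cg + 2) * Rabs alpha6.
Proof.
  intros Ha. pose proof (omega1_alpha Ha).
  apply (absorb_constant _ _ _ (Rabs y0 * Rabs y1 * Rabs y2) 10);
    [exact HCg| |apply omega1_weighted; exact Ha|pose proof (Rabs_pos alpha6); lra].
  apply Rmult_le_pos; [apply Rmult_le_pos|]; apply Rabs_pos.
Qed.

(* In Omega_2 the four small frequencies lie where m = 1, so only the resonant
   pair y0, y1 carries a nontrivial weight, and y0^3 + y1^3 dominates alpha. *)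
Lemma omega2_estimate N : (forall u, Rabs u <= N -> f u = u ^ 3) ->
  Rabs y2 <= N -> Rabs (y2 ^ 3 + y3 ^ 3 + y4 ^ 3 + y5 ^ 3) <= Rabs (y0 ^ 3 + y1 ^ 3) / 100 ->
  Rabs weighted <= (40 * Cg + 2) * Rabs alpha6.
Proof.
  intros Hcube HN Hrest.
  rewrite (Hcube y2), (Hcube y3), (Hcube y4), (Hcube y5) by lra.
  replace alpha6 with ((y0 ^ 3 + y1 ^ 3) + (y2 ^ 3 + y3 ^ 3 + y4 ^ 3 + y5 ^ 3)) by ring.
  replace (f y0 + f y1 + y2 ^ 3 + y3 ^ 3 + y4 ^ 3 + y5 ^ 3)
    with ((f y0 + f y1) + (y2 ^ 3 + y3 ^ 3 + y4 ^ 3 + y5 ^ 3)) by ring.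
  pose proof (cube_pair_lower y0 y1) as Hc.
  set (T := y0 ^ 3 + y1 ^ 3) in *. set (Q := y2 ^ 3 + y3 ^ 3 + y4 ^ 3 + y5 ^ 3) in *.
  assert (Hpair : Rabs (f y0 + f y1) <= Cg * (4 * Rabs T)).
  { eapply Rle_trans; [apply (pair_bound f Cg Hodd Hlip)|]. rewrite Rmult_assoc.
    apply Rmult_le_compat_l; [exact HCg|]. lra. }
  pose proof (Rabs_sum_lower T Q). pose proof (Rabs_triang (f y0 + f y1) Q).
  assert (Cg * Rabs T <= Cg * (100 / 99 * Rabs (T + Q))) by (apply Rmult_le_compat_l; lra).
  assert (0 <= Cg * Rabs (T + Q)) by (apply Rmult_le_pos; [lra|apply Rabs_pos]).
  pose proof (Rabs_pos (T + Q)). lra.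
Qed.

(* In Omega_3 the tail is dominated by X = |y0 + y1| |y0|^2 ~ |y0^3 + y1^3|. *)
Lemma omega3_tail : Rabs y2 <= Rabs y0 / 100 ->
  Rabs y2 ^ 2 <= Rabs (y0 + y1) * Rabs y0 / 100 ->
  Rabs y2 ^ 3 <= Rabs (y0 + y1) * Rabs y0 ^ 2 / 10000.
Proof.
  intros Ha Hb. replace (Rabs y2 ^ 3) with (Rabs y2 * Rabs y2 ^ 2) by ring.
  apply Rle_trans with (Rabs y0 / 100 * (Rabs (y0 + y1) * Rabs y0 / 100)); [|right; field].
  apply Rmult_le_compat; [apply Rabs_pos|apply pow2_ge_0|exact Ha|exact Hb].
Qed.

(* Omega_3: |alpha| >= X / 5 while the weighted sum is at most 5 Cg X. *)
Lemma omega3_estimate : Rabs y2 <= Rabs y0 / 100 ->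
  Rabs y2 ^ 2 <= Rabs (y0 + y1) * Rabs y0 / 100 ->
  Rabs weighted <= (40 * Cg + 2) * Rabs alpha6.
Proof.
  intros Ha Hb. pose proof (omega3_tail Ha Hb) as Htail.
  set (X := Rabs (y0 + y1) * Rabs y0 ^ 2) in *.
  pose proof (Rabs_pos y0). pose proof (Rabs_pos y1). pose proof (Rabs_pos y2).
  assert (HX : 0 <= X) by (apply Rmult_le_pos; [apply Rabs_pos|apply pow2_ge_0]).
  assert (Hsq : Rabs y0 ^ 2 <= (Rabs y0 + Rabs y1) ^ 2 <= 4 * Rabs y0 ^ 2) by (simpl; split; nra).
  assert (Hpair : Rabs (f y0 + f y1) <= Cg * (4 * X)).
  { eapply Rle_trans; [apply (pair_bound f Cg Hodd Hlip)|]. rewrite Rmult_assoc.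
    apply Rmult_le_compat_l; [exact HCg|]. unfold X. rewrite <- Rmult_assoc, (Rmult_comm 4).
    rewrite Rmult_assoc. apply Rmult_le_compat_l; [apply Rabs_pos|lra]. }
  assert (Hpair3 : X / 4 <= Rabs (y0 ^ 3 + y1 ^ 3)).
  { eapply Rle_trans; [|apply cube_pair_lower]. unfold X, Rdiv.
    apply Rmult_le_compat_r; [lra|]. apply Rmult_le_compat_l; [apply Rabs_pos|lra]. }
  assert (Hsmall : forall y, Rabs y <= Rabs y2 ->
            Rabs (y ^ 3) <= X / 10000 /\ Rabs (f y) <= Cg * (X / 10000)).
  { intros y Hy. assert (Rabs y2 ^ 3 <= X / 10000) by exact Htail. split.
    - eapply Rle_trans; [apply cube_abs_le; exact Hy|]. lra.
    - eapply Rle_trans; [apply (cubic_growth f Cg HCg Hodd Hlip _ _ Hy)|].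
      apply Rmult_le_compat_l; lra. }
  destruct (Hsmall y2 (Rle_refl _)) as [A2 B2]. destruct (Hsmall y3 H23) as [A3 B3].
  destruct (Hsmall y4 ltac:(lra)) as [A4 B4]. destruct (Hsmall y5 ltac:(lra)) as [A5 B5].
  assert (Halpha : X / 5 <= Rabs alpha6).
  { replace alpha6 with ((y0 ^ 3 + y1 ^ 3) + (y2 ^ 3 + y3 ^ 3 + y4 ^ 3 + y5 ^ 3)) by ring.
    eapply Rle_trans; [|apply Rabs_sum_lower].
    pose proof (Rabs_triang4 (y2 ^ 3) (y3 ^ 3) (y4 ^ 3) (y5 ^ 3)). lra. }
  apply (absorb_constant _ _ _ X 5); [exact HCg|exact HX| |lra].
  replace weighted with ((f y0 + f y1) + f y2 + f y3 + f y4 + f y5) by ring.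
  pose proof (Rabs_triang5 (f y0 + f y1) (f y2) (f y3) (f y4) (f y5)).
  assert (0 <= Cg * X) by (apply Rmult_le_pos; lra). lra.
Qed.

(* In Omega_4 the two smallest frequencies are negligible: S := y0 + y1 + y2 + y3 = -(y4 + y5)
   is small, hence one of |y0 + y1|, |y0 + y2|, |y0 + y3| is at least |y0| / 2. *)
Lemma omega4_geometry : Rabs y4 <= Rabs y3 / 100 ->
  Rabs (y0 + y1 + y2 + y3) <= 2 * Rabs y4 /\
  198 / 100 * Rabs y0 <= Rabs (y0 + y1) + Rabs (y0 + y2) + Rabs (y0 + y3).
Proof.
  intros Ha.
  assert (HS : Rabs (y0 + y1 + y2 + y3) <= 2 * Rabs y4).
  { replace (y0 + y1 + y2 + y3) with (- (y4 + y5)) by lra. rewrite Rabs_Ropp.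
    pose proof (Rabs_triang y4 y5). lra. }
  split; [exact HS|].
  pose proof (Rabs_triang (y0 + y1 + (y0 + y2)) (y0 + y3)).
  pose proof (Rabs_triang (y0 + y1) (y0 + y2)).
  pose proof (Rabs_sum_lower (2 * y0) (y0 + y1 + y2 + y3)).
  replace (2 * y0 + (y0 + y1 + y2 + y3)) with (y0 + y1 + (y0 + y2) + (y0 + y3)) in * by ring.
  rewrite Rabs_mult, (Rabs_pos_eq 2) in * by lra. lra.
Qed.

(* The quartet y0..y3 is handled by quad_bound, choosing z3 among y1, y2, y3 with
   |y0 + z3| >= |y0| / 2. *)
Lemma omega4_quartet : Rabs y4 <= Rabs y3 / 100 ->
  Rabs y4 * Rabs y0 ^ 2 <= Rabs (y0 + y1) * Rabs (y0 + y2) * Rabs (y0 + y3) / 100 ->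
  Rabs (f y0 + f y1 + f y2 + f y3) <= 11 * Cg * (Rabs (y0 + y1) * Rabs (y0 + y2) * Rabs (y0 + y3)).
Proof.
  intros Ha Hb. destruct (omega4_geometry Ha) as [HS Hsum3].
  set (S := y0 + y1 + y2 + y3) in *.
  set (D := Rabs (y0 + y1) * Rabs (y0 + y2) * Rabs (y0 + y3)) in *.
  pose proof (Rabs_pos y4). pose proof (pow2_ge_0 (Rabs y0)).
  assert (HSy0 : Rabs S <= 2 * Rabs y0) by lra.
  assert (HSD : Rabs S * Rabs y0 ^ 2 <= 2 * (D / 100)).
  { apply Rle_trans with (2 * Rabs y4 * Rabs y0 ^ 2); [apply Rmult_le_compat_r; lra|lra]. }
  assert (Hq : Rabs (f y0 + f y1 + f y2 + f y3) <= 10 * Cg * D + 16 * Cg * (Rabs S * Rabs y0 ^ 2)).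
  { destruct (Rle_or_lt (Rabs y0 / 2) (Rabs (y0 + y3))) as [Hh|Hh];
      [|destruct (Rle_or_lt (Rabs y0 / 2) (Rabs (y0 + y2))) as [He|He]].
    - apply (quad_bound f Cg HCg Hodd Hlip Hdd); unfold S in *; lra.
    - replace (f y0 + f y1 + f y2 + f y3) with (f y0 + f y1 + f y3 + f y2) by ring.
      replace D with (Rabs (y0 + y1) * Rabs (y0 + y3) * Rabs (y0 + y2)) by (unfold D; ring).
      replace S with (y0 + y1 + y3 + y2) by (unfold S; ring).
      apply (quad_bound f Cg HCg Hodd Hlip Hdd); unfold S in *; [lra|lra|lra| |lra].
      replace (y0 + y1 + y3 + y2) with (y0 + y1 + y2 + y3) by ring. exact HSy0.
    - replace (f y0 + f y1 + f y2 + f y3) with (f y0 + f y2 + f y3 + f y1) by ring.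
      replace D with (Rabs (y0 + y2) * Rabs (y0 + y3) * Rabs (y0 + y1)) by (unfold D; ring).
      replace S with (y0 + y2 + y3 + y1) by (unfold S; ring).
      apply (quad_bound f Cg HCg Hodd Hlip Hdd); unfold S in *; [lra|lra|lra| |lra].
      replace (y0 + y2 + y3 + y1) with (y0 + y1 + y2 + y3) by ring. exact HSy0. }
  assert (Cg * (Rabs S * Rabs y0 ^ 2) <= Cg * (2 * (D / 100))) by (apply Rmult_le_compat_l; lra).
  assert (0 <= Cg * D)
    by (apply Rmult_le_pos; [lra|unfold D; apply Rmult_le_pos; [apply Rmult_le_pos|];
        apply Rabs_pos]).
  lra.
Qed.

(* alpha = 3 (y0+y1)(y0+y2)(y0+y3) + O(|y4| |y0|^2), with the error at most 0.58 D. *)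
Lemma omega4_alpha : Rabs y4 <= Rabs y3 / 100 ->
  Rabs y4 * Rabs y0 ^ 2 <= Rabs (y0 + y1) * Rabs (y0 + y2) * Rabs (y0 + y3) / 100 ->
  2 * (Rabs (y0 + y1) * Rabs (y0 + y2) * Rabs (y0 + y3)) <= Rabs alpha6.
Proof.
  intros Ha Hb. destruct (omega4_geometry Ha) as [HS _].
  set (S := y0 + y1 + y2 + y3) in *. set (w := - (y0 + y1 + y2)).
  set (D := Rabs (y0 + y1) * Rabs (y0 + y2) * Rabs (y0 + y3)) in *.
  set (E := Rabs y4 * Rabs y0 ^ 2) in *.
  pose proof (Rabs_pos y0). pose proof (Rabs_pos y4). pose proof (Rabs_pos S).
  pose proof (Rabs_triang y0 y1). pose proof (Rabs_triang y0 y2).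
  assert (HD : 0 <= D) by (unfold D; apply Rmult_le_pos; [apply Rmult_le_pos|]; apply Rabs_pos).
  assert (Hw : Rabs w <= 3 * Rabs y0).
  { unfold w. rewrite Rabs_Ropp. pose proof (Rabs_triang (y0 + y1) y2). lra. }
  assert (E1 : Rabs (3 * (y0 + y1) * (y0 + y2) * S) <= 24 * E).
  { rewrite !Rabs_mult, (Rabs_pos_eq 3) by lra.
    assert (Rabs (y0 + y1) * Rabs (y0 + y2) * Rabs S
            <= (2 * Rabs y0) * (2 * Rabs y0) * (2 * Rabs y4))
      by (apply mul3_le; pose proof (Rabs_pos (y0 + y1)); pose proof (Rabs_pos (y0 + y2)); lra).
    unfold E. simpl in *. lra. }
  assert (E2 : Rabs (y3 ^ 3 - w ^ 3) <= 32 * E).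
  { eapply Rle_trans; [apply cube_difference_le|].
    replace (y3 - w) with S by (unfold S, w; ring).
    assert ((Rabs y3 + Rabs w) ^ 2 <= (4 * Rabs y0) ^ 2)
      by (apply pow_incr; pose proof (Rabs_pos y3); pose proof (Rabs_pos w); lra).
    apply Rle_trans with (2 * Rabs y4 * (4 * Rabs y0) ^ 2);
      [apply Rmult_le_compat; [apply Rabs_pos|apply pow2_ge_0|lra|lra]|unfold E; simpl; lra]. }
  assert (E3 : forall y, Rabs y <= Rabs y4 -> Rabs (y ^ 3) <= E).
  { intros y Hy. eapply Rle_trans; [apply cube_abs_le, Hy|]. unfold E.
    replace (Rabs y4 ^ 3) with (Rabs y4 * Rabs y4 ^ 2) by ring.
    apply Rmult_le_compat_l; [lra|]. apply pow_incr. lra. }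
  pose proof (E3 y4 (Rle_refl _)). pose proof (E3 y5 H45).
  assert (Hmain : Rabs (3 * (y0 + y1) * (y0 + y2) * (y0 + y3)) = 3 * D)
    by (rewrite !Rabs_mult, (Rabs_pos_eq 3) by lra; unfold D; ring).
  replace alpha6 with (3 * (y0 + y1) * (y0 + y2) * (y0 + y3)
      + (- (3 * (y0 + y1) * (y0 + y2) * S) + (y3 ^ 3 - w ^ 3) + y4 ^ 3 + y5 ^ 3))
    by (unfold S, w; ring).
  eapply Rle_trans; [|apply Rabs_sum_lower].
  pose proof (Rabs_triang4 (- (3 * (y0 + y1) * (y0 + y2) * S)) (y3 ^ 3 - w ^ 3) (y4 ^ 3) (y5 ^ 3)).
  rewrite Rabs_Ropp in *. lra.
Qed.

(* Omega_4: the pair y4, y5 is negligible in the weighted sum by the third condition. *)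
Lemma omega4_estimate : Rabs y4 <= Rabs y3 / 100 ->
  Rabs y4 * Rabs y0 ^ 2 <= Rabs (y0 + y1) * Rabs (y0 + y2) * Rabs (y0 + y3) / 100 ->
  Rabs (f y4 + f y5) <= Rabs (f y0 + f y1 + f y2 + f y3) / 100 ->
  Rabs weighted <= (40 * Cg + 2) * Rabs alpha6.
Proof.
  intros Ha Hb Hq. pose proof (omega4_quartet Ha Hb). pose proof (omega4_alpha Ha Hb).
  set (D := Rabs (y0 + y1) * Rabs (y0 + y2) * Rabs (y0 + y3)) in *.
  assert (HD : 0 <= D) by (unfold D; apply Rmult_le_pos; [apply Rmult_le_pos|]; apply Rabs_pos).
  apply (absorb_constant _ _ _ D 12); [exact HCg|exact HD| |pose proof (Rabs_pos alpha6); lra].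
  replace weighted with ((f y0 + f y1 + f y2 + f y3) + (f y4 + f y5)) by ring.
  pose proof (Rabs_triang (f y0 + f y1 + f y2 + f y3) (f y4 + f y5)).
  assert (0 <= Cg * D) by (apply Rmult_le_pos; lra). lra.
Qed.

End SixTuple.

Lemma omega2_padded n C0 K N xi sigma : (n = 5 \/ n = 6)%nat ->
  Omega2 n C0 K N (star n xi sigma) -> Omega2 6 C0 K N (star n xi sigma).
Proof.
  intros Hn HO. unfold Omega2 in *. destruct HO as [H1 [H2 [H3 [H4 H5]]]].
  refine (conj H1 (conj H2 (conj H3 (conj H4 _)))).
  change (6 - 2)%nat with 4%nat.
  replace (rsum 4 (fun j => star n xi sigma (j + 2) ^ 3))
    with (rsum (n - 2) (fun j => star n xi sigma (j + 2) ^ 3)); [exact H5|].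
  symmetry. apply rsum_pad; [lia|]. intros j Hj. unfold star.
  replace (Nat.ltb (j + 2) n) with false by (symmetry; apply Nat.ltb_ge; lia). ring.
Qed.

Definition weighted_cube (mu : R -> R) (N u : R) : R := mult mu N u ^ 2 * u ^ 3.

Lemma weighted_cube_odd mu N u : (forall x, mu (- x) = mu x) ->
  weighted_cube mu N (- u) = - weighted_cube mu N u.
Proof.
  intros Heven. unfold weighted_cube, mult.
  replace (- u / N) with (- (u / N)) by (unfold Rdiv; ring). rewrite Heven. ring.
Qed.

Lemma weighted_cube_flat mu N u : 0 < N -> (forall x, Rabs x <= 1 -> mu x = 1) ->
  Rabs u <= N -> weighted_cube mu N u = u ^ 3.
Proof.
  intros HN Hflat Hu. unfold weighted_cube, mult. rewrite Hflat; [ring|].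
  unfold Rdiv. rewrite Rabs_mult, Rabs_inv, (Rabs_pos_eq N) by lra.
  apply (Rmult_le_reg_r N); [lra|]. field_simplify; lra.
Qed.

(* For an admissible profile, u |-> m_N(u)^2 u^3 = N^3 w(u / N) obeys the cubic bounds
   with a constant independent of N. *)
Lemma weighted_cube_bounds s mu : 0 <= s <= 1 -> admissible_profile s mu ->
  exists Cg, 0 <= Cg /\ forall N, 0 < N ->
    cubic_lipschitz Cg (weighted_cube mu N) /\ cubic_second_difference Cg (weighted_cube mu N).
Proof.
  intros Hs [[d [Hd0 Htower]] [_ [_ [Hrange [Hflat Hpower]]]]]. subst mu.
  destruct (weight_d2_linear_bound s d Htower Hflat Hpower Hrange Hs) as [Cg [HCg Hw2]].
  exists Cg. split; [exact HCg|]. intros N HN.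
  assert (Hscale : forall u, weighted_cube (d 0%nat) N u = N ^ 3 * weight d (u / N))
    by (intros u; unfold weighted_cube, weight, mult; field; lra).
  assert (Hw1 : weight_d1 d 0 = 0) by (unfold weight_d1; ring).
  split.
  - apply (cubic_lipschitz_scale Cg (weight d) _ N HN Hscale).
    apply (second_order_lipschitz _ (weight_d1 d) (weight_d2 d));
      auto using weight_derive, weight_d1_derive.
  - apply (cubic_second_difference_scale Cg (weight d) _ N HN Hscale).
    apply (second_order_difference _ (weight_d1 d) (weight_d2 d));
      auto using weight_derive, weight_d1_derive.
Qed.

Lemma omega_estimate mu N Cg K (x : nat -> R) : 0 < N -> 0 <= Cg ->
  (forall y, mu (- y) = mu y) -> (forall y, Rabs y <= 1 -> mu y = 1) ->
  cubic_lipschitz Cg (weighted_cube mu N) -> cubic_second_difference Cg (weighted_cube mu N) ->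
  (forall j, (j < 5)%nat -> Rabs (x (S j)) <= Rabs (x j)) ->
  rsum 6 x = 0 ->
  Omega1 100 x \/ Omega2 6 100 K N x \/ Omega3 100 x \/ Omega4 100 N mu x ->
  Rabs (rsum 6 (fun j => weighted_cube mu N (x j)))
    <= (40 * Cg + 2) * Rabs (rsum 6 (fun j => x j ^ 3)).
Proof.
  intros HN HCg Heven Hflat Hlip Hdd Hord Hsum HO.
  assert (Hodd : forall u, weighted_cube mu N (- u) = - weighted_cube mu N u)
    by (intros; apply weighted_cube_odd, Heven).
  pose proof (Hord 0%nat ltac:(lia)) as H01. pose proof (Hord 1%nat ltac:(lia)) as H12.
  pose proof (Hord 2%nat ltac:(lia)) as H23. pose proof (Hord 3%nat ltac:(lia)) as H34.
  pose proof (Hord 4%nat ltac:(lia)) as H45.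
  unfold Omega1, Omega2, Omega3, Omega4, mll in HO. cbn [rsum Nat.add Nat.sub] in *.
  rewrite !Rplus_0_l in *.
  destruct HO as [HO|[[_ [_ [Hsmall [_ Hrest]]]]|[[Ha Hb]|[Ha [Hb Hc]]]]].
  - eapply omega1_estimate; eassumption.
  - eapply omega2_estimate with (N := N); try eassumption.
    + intros u Hu. apply weighted_cube_flat; assumption.
    + assert (0 < N / 100) by (apply Rdiv_lt_0_compat; lra). lra.
  - eapply omega3_estimate; eassumption.
  - eapply omega4_estimate; eassumption.
Qed.

Theorem mainTheorem2 :
  forall k : nat, (k = 3 \/ k = 4)%nat ->
  forall K : R, 1 <= K ->
  exists C0 : R, 1 <= C0 /\
  forall (s : R) (mu : R -> R), 1/2 <= s < 1 -> admissible_profile s mu ->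
  exists C : R, 0 <= C /\
  forall (N lam : R) (xi : nat -> R), 1 <= N -> 1 <= lam ->
    in_Gamma (k + 2) lam xi ->
    in_Omega (k + 2) C0 K N mu xi ->
    Rabs (Mreal mu N (k + 2) xi) <= C * Rabs (alpha (k + 2) xi).
Proof.
  intros k Hk K _. exists 100. split; [lra|].
  intros s mu Hs Hadm.
  destruct (weighted_cube_bounds s mu ltac:(lra) Hadm) as [Cg [HCg Hbounds]].
  exists (40 * Cg + 2). split; [lra|].
  intros N lam xi HN _ [_ Hzero] [sigma [Hsort HO]].
  destruct (Hbounds N ltac:(lra)) as [Hlip Hdd].
  destruct Hadm as [_ [Heven [_ [_ [Hflat _]]]]].
  assert (Hn : (k + 2 = 5 \/ k + 2 = 6)%nat) by lia.
  assert (Hpad : forall F, F 0 = 0 ->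
            rsum (k + 2) (fun j => F (xi j)) = rsum 6 (fun j => F (star (k + 2) xi sigma j)))
    by (intros F HF; apply rsum_star_padded; [exact Hsort|lia|exact HF]).
  replace (Mreal mu N (k + 2) xi)
    with (rsum 6 (fun j => weighted_cube mu N (star (k + 2) xi sigma j)))
    by (symmetry; apply (Hpad (weighted_cube mu N)); unfold weighted_cube; ring).
  replace (alpha (k + 2) xi) with (rsum 6 (fun j => star (k + 2) xi sigma j ^ 3))
    by (symmetry; apply (Hpad (fun t => t ^ 3)); ring).
  apply (omega_estimate mu N Cg K); try assumption; [lra| | |].
  - intros j Hj. apply star_nonincreasing; [exact Hsort|lia].
  - rewrite <- Hzero. symmetry. apply (Hpad (fun t => t)). reflexivity.
  - destruct HO as [HO|[HO|HO]]; [left|right; left; apply omega2_padded|right; right]; assumption.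
Qed.
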